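(* Let $(X,*,0)$ be a solid weak BCC-algebra. Then for all $x,y\in X$ belonging to the same branch of $X$ we have $x*(x*y)\leqslant y$.
   Context: A weak BCC-algebra is a set $X$ with a binary operation $*$ and a constant $0$ satisfying, for all $x,y,z\in X$: (i) $((x*y)*(z*y))*(x*z)=0$; (ii) $x*x=0$; (iii) $x*0=x$; (iv) $x*y=y*x=0$ implies $x=y$. The relation $x\leqslant y$ iff $x*y=0$ is a partial order on $X$. Let $I(X)$ be the set of minimal elements of $X$ with respect to $\leqslant$. For $a\in I(X)$ the branch initiated by $a$ is $B(a)=\{x\in X: a\leqslant x\}$; $X$ is the disjoint union of its branches, and $x,y$ ''belong to the same branch'' means $x,y\in B(a)$ for some $a\in I(X)$. A weak BCC-algebra is called (left) solid if $(x*y)*z=(x*z)*y$ holds for all $x,y$ belonging to the same branch and all $z\in X$. *)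

Record weak_BCC (X : Type) (op : X -> X -> X) (zero : X) : Prop := {
  wbcc_1 : forall x y z, op (op (op x y) (op z y)) (op x z) = zero;
  wbcc_2 : forall x, op x x = zero;
  wbcc_3 : forall x, op x zero = x;
  wbcc_4 : forall x y, op x y = zero -> op y x = zero -> x = y
}.

Definition bcc_le {X : Type} (op : X -> X -> X) (zero : X) (x y : X) : Prop :=
  op x y = zero.

Definition bcc_minimal {X : Type} (op : X -> X -> X) (zero : X) (a : X) : Prop :=
  forall x, bcc_le op zero x a -> x = a.

Definition in_branch {X : Type} (op : X -> X -> X) (zero : X) (a x : X) : Prop :=
  bcc_le op zero a x.

Definition same_branch {X : Type} (op : X -> X -> X) (zero : X) (x y : X) : Prop :=
  exists a, bcc_minimal op zero a /\ in_branch op zero a x /\ in_branch op zero a y.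

Definition solid {X : Type} (op : X -> X -> X) (zero : X) : Prop :=
  forall x y z, same_branch op zero x y -> op (op x y) z = op (op x z) y.


(* Solidity with [z := x * y] swaps the two right factors:
   [(x * (x * y)) * y = (x * y) * (x * y) = 0]. *)
Theorem lemma3p2 (X : Type) (op : X -> X -> X) (zero : X)
  (HX : weak_BCC X op zero) (Hsolid : solid op zero) :
  forall x y : X, same_branch op zero x y -> bcc_le op zero (op x (op x y)) y.
Proof.
  intros x y Hxy. unfold bcc_le.
  rewrite <- (Hsolid x y (op x y) Hxy).
  apply (wbcc_2 _ _ _ HX).
Qed.
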